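(* Let $P$ be a subgroup of $I_K(\mathfrak{n})$ with $P_{K,1}(\mathfrak{n})\subseteq P\subseteq P_K(\mathfrak{n})$ and let $\Gamma$ be a subgroup of $\mathrm{SL}_2(\mathbb{Z})$. The map $\phi_\Gamma:\mathcal{Q}_N(d_K)/\sim_\Gamma\to I_K(\mathfrak{n})/P$, $[Q]\mapsto[[\omega_Q,1]]$, is well defined and injective if and only if $\Gamma$ satisfies property (P): for every $Q\in\mathcal{Q}_N(d_K)$ and every $\gamma\in\mathrm{SL}_2(\mathbb{Z})$ with $Q^{\gamma^{-1}}\in\mathcal{Q}_N(d_K)$, one has $j(\gamma,\omega_Q)\mathcal{O}_K\in P$ if and only if $\gamma\in\Gamma\cdot I_{\omega_Q}$.
   Context: Let $K$ be an imaginary quadratic field with discriminant $d_K$ and ring of integers $\mathcal{O}_K$. Let $N$ be a positive integer and $\mathfrak{n}=N\mathcal{O}_K$. $I_K(\mathfrak{n})$ denotes the group of fractional ideals of $K$ relatively prime to $\mathfrak{n}$, $P_K(\mathfrak{n})$ its subgroup of principal fractional ideals, and $P_{K,1}(\mathfrak{n})=\{\nu\mathcal{O}_K:\nu\in K^*,\ \nu\equiv^*1\pmod{\mathfrak{n}}\}$, where $\equiv^*$ is multiplicative congruence. $\mathcal{Q}(d_K)$ is the set of primitive positive definite binary quadratic forms $ax^2+bxy+cy^2\in\mathbb{Z}[x,y]$ with $b^2-4ac=d_K$, and $\mathcal{Q}_N(d_K)=\{ax^2+bxy+cy^2\in\mathcal{Q}(d_K):\gcd(N,a)=1\}$. For $Q=ax^2+bxy+cy^2\in\mathcal{Q}(d_K)$,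 $\omega_Q=(-b+\sqrt{d_K})/(2a)\in\mathbb{H}$ and $[\omega_Q,1]=\mathbb{Z}\omega_Q+\mathbb{Z}$ (a fractional ideal of $K$). For $\gamma\in\mathrm{SL}_2(\mathbb{Z})$, $Q^\gamma(x,y)=Q(\gamma\,(x,y)^T)$. For a subgroup $\Gamma\subseteq\mathrm{SL}_2(\mathbb{Z})$, the relation $\sim_\Gamma$ on $\mathcal{Q}_N(d_K)$ is: $Q\sim_\Gamma Q'$ iff $Q'=Q^\gamma$ for some $\gamma\in\Gamma$. For $\gamma=\begin{bmatrix}a&b\\c&d\end{bmatrix}\in\mathrm{SL}_2(\mathbb{Z})$ and $\tau\in\mathbb{H}$, $j(\gamma,\tau)=c\tau+d$. $I_{\omega}$ denotes the isotropy subgroup of $\omega\in\mathbb{H}$ in $\mathrm{SL}_2(\mathbb{Z})$ under the action by fractional linear transformations. *)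

(* K = Q(sqrt d) is realised inside algC. *)
From HB Require Import structures.
From mathcomp Require Import all_boot all_order all_algebra all_field.
Set Implicit Arguments. Unset Strict Implicit. Unset Printing Implicit Defensive.
Import Order.TTheory GRing.Theory Num.Theory.
Local Open Scope ring_scope.

Definition sqfree_int (m : int) : Prop :=
  forall p : nat, prime p -> ~~ ((p ^ 2)%N%:Z %| m)%Z.

Definition fund_disc (d : int) : Prop :=
  (d != 1 /\ (d %% 4)%Z = 1 /\ sqfree_int d) \/
  (exists m : int, d = 4 * m /\ ((m %% 4)%Z = 2 \/ (m %% 4)%Z = 3) /\ sqfree_int m).

Definition Kelt (d : int) (x : algC) : Prop :=
  exists r s : rat, x = ratr r + ratr s * sqrtC (d%:~R).

Definition OK (d : int) (x : algC) : Prop := Kelt d x /\ x \in Aint.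

Definition cset := algC -> Prop.
Definition eqI (I J : cset) : Prop := forall x, I x <-> J x.

Definition frac_ideal (d : int) (I : cset) : Prop :=
  (forall x, I x -> Kelt d x) /\
  I 0 /\
  (forall x y, I x -> I y -> I (x - y)) /\
  (forall r x, OK d r -> I x -> I (r * x)) /\
  (exists x, I x /\ x != 0) /\
  (exists c, [/\ c != 0, OK d c & forall x, I x -> OK d (c * x)]).

Definition prodI (I J : cset) : cset := fun x =>
  exists s : seq (algC * algC),
    (forall p, p \in s -> I p.1 /\ J p.2) /\ x = \sum_(p <- s) p.1 * p.2.

Definition sumI (I J : cset) : cset := fun x =>
  exists y z, [/\ I y, J z & x = y + z].

Definition principal (d : int) (nu : algC) : cset := fun x =>
  exists r, OK d r /\ x = nu * r.

(** the modulus n = N O_K *)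
Definition nId (d : int) (N : nat) : cset := principal d (N%:R).

Definition coprime_integral (d : int) (N : nat) (A : cset) : Prop :=
  [/\ frac_ideal d A, (forall x, A x -> OK d x) & eqI (sumI A (nId d N)) (OK d)].

(** I_K(n): fractional ideals relatively prime to n, i.e. I = A B^{-1}
    with A, B integral ideals relatively prime to n *)
Definition I_K (d : int) (N : nat) (I : cset) : Prop :=
  frac_ideal d I /\
  exists A B, [/\ coprime_integral d N A, coprime_integral d N B & eqI (prodI I B) A].

Definition P_K (d : int) (N : nat) (I : cset) : Prop :=
  I_K d N I /\ exists nu, [/\ nu != 0, Kelt d nu & eqI I (principal d nu)].

Definition mult_cong1 (d : int) (N : nat) (nu : algC) : Prop :=
  exists al be, [/\ OK d al, OK d be & be != 0] /\
    [/\ coprime_integral d N (principal d al), coprime_integral d N (principal d be),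
    nu = al / be & OK d ((al - be) / N%:R)].

Definition P_K1 (d : int) (N : nat) (I : cset) : Prop :=
  exists nu, [/\ nu != 0, Kelt d nu, mult_cong1 d N nu & eqI I (principal d nu)].

Definition ideal_subgroup (d : int) (N : nat) (P : cset -> Prop) : Prop :=
  [/\ (forall I J, eqI I J -> P I -> P J),
      (forall I, P I -> I_K d N I),
      P (OK d),
      (forall I J, P I -> P J -> P (prodI I J)) &
      (forall I, P I -> exists J, P J /\ eqI (prodI I J) (OK d))].

Definition same_class (P : cset -> Prop) (I J : cset) : Prop :=
  exists C, P C /\ eqI I (prodI J C).

(** binary quadratic forms a x^2 + b x y + c y^2 as triples ((a, b), c) *)
Definition bqf := (int * int * int)%type.
Definition qa (Q : bqf) := Q.1.1.
Definition qb (Q : bqf) := Q.1.2.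
Definition qc (Q : bqf) := Q.2.

(** Q(d): primitive positive definite forms of discriminant d (d < 0 assumed) *)
Definition QF (d : int) (Q : bqf) : Prop :=
  [/\ 0 < qa Q, gcdz (gcdz (qa Q) (qb Q)) (qc Q) = 1 & qb Q ^+ 2 - 4 * qa Q * qc Q = d].

Definition QN (d : int) (N : nat) (Q : bqf) : Prop := QF d Q /\ coprimez (qa Q) N%:Z.

Definition SL2 (g : 'M[int]_2) : Prop := \det g = 1.
Definition m00 (g : 'M[int]_2) := g ord0 ord0.
Definition m01 (g : 'M[int]_2) := g ord0 ord_max.
Definition m10 (g : 'M[int]_2) := g ord_max ord0.
Definition m11 (g : 'M[int]_2) := g ord_max ord_max.

(** Q^g (x, y) = Q (g (x, y)^T) *)
Definition form_act (Q : bqf) (g : 'M[int]_2) : bqf :=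
  let a := qa Q in let b := qb Q in let c := qc Q in
  let p := m00 g in let q := m01 g in let r := m10 g in let s := m11 g in
  ((a * p ^+ 2 + b * p * r + c * r ^+ 2,
    2 * a * p * q + b * (p * s + q * r) + 2 * c * r * s),
    a * q ^+ 2 + b * q * s + c * s ^+ 2).

Definition mob (g : 'M[int]_2) (t : algC) : algC :=
  ((m00 g)%:~R * t + (m01 g)%:~R) / ((m10 g)%:~R * t + (m11 g)%:~R).
Definition jfac (g : 'M[int]_2) (t : algC) : algC := (m10 g)%:~R * t + (m11 g)%:~R.

Definition omega (d : int) (Q : bqf) : algC :=
  (- (qb Q)%:~R + sqrtC (d%:~R)) / (2 * (qa Q)%:~R).
Definition lat (w : algC) : cset := fun x =>
  exists m n : int, x = m%:~R * w + n%:~R.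

Definition SL2_subgroup (G : 'M[int]_2 -> Prop) : Prop :=
  [/\ (forall g, G g -> SL2 g), G 1%:M,
      (forall g h, G g -> G h -> G (g *m h)) & (forall g, G g -> G (invmx g))].

Definition simG (G : 'M[int]_2 -> Prop) (Q Q' : bqf) : Prop :=
  exists g, G g /\ Q' = form_act Q g.

Definition phi_wd_inj (d : int) (N : nat) (P : cset -> Prop) (G : 'M[int]_2 -> Prop) : Prop :=
  [/\ (forall Q, QN d N Q -> I_K d N (lat (omega d Q))),
      (forall Q Q', QN d N Q -> QN d N Q' -> simG G Q Q' ->
         same_class P (lat (omega d Q)) (lat (omega d Q'))) &
      (forall Q Q', QN d N Q -> QN d N Q' ->
         same_class P (lat (omega d Q)) (lat (omega d Q')) -> simG G Q Q')].

Definition propertyP (d : int) (N : nat) (P : cset -> Prop) (G : 'M[int]_2 -> Prop) : Prop :=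
  forall Q g, QN d N Q -> SL2 g -> QN d N (form_act Q (invmx g)) ->
    (P (principal d (jfac g (omega d Q))) <->
     exists g1 h, [/\ G g1, SL2 h, mob h (omega d Q) = omega d Q & g = g1 *m h]).

From HB Require Import structures.
From mathcomp Require Import all_boot all_order all_algebra all_field.
From mathcomp Require Import zify ring.
Import Order.TTheory GRing.Theory Num.Theory.
Set Implicit Arguments. Unset Strict Implicit. Unset Printing Implicit Defensive.
Local Open Scope ring_scope.

(** The proof reduces both sides to two equivalences, valid for Q in Q_N(d)
    and g in SL2(Z), with Q' = Q^{g^-1}:
    (a) [omega_Q, 1] and [omega_Q', 1] are in the same class of I_K(n)/P
        iff j(g, omega_Q) O_K lies in P   (same_class_iff_jfac);
    (b) Q ~_Gamma Q' iff g lies in Gamma . I_{omega_Q}   (simG_iff_coset);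
    together with the fact that every pair of forms related by either
    relation is of the shape (Q, Q^{g^-1}) (simG_act, same_class_act).
    Property (P) is then literally "(a) iff (b)", and well-definedness plus
    injectivity is "(b) iff (a)" for all such pairs. *)

Lemma lift0_ord_max : lift ord0 (ord0 : 'I_1) = ord_max :> 'I_2.
Proof. exact: val_inj. Qed.

Lemma mul22E (g h : 'M[int]_2) :
  [/\ m00 (g *m h) = m00 g * m00 h + m01 g * m10 h,
      m01 (g *m h) = m00 g * m01 h + m01 g * m11 h,
      m10 (g *m h) = m10 g * m00 h + m11 g * m10 h &
      m11 (g *m h) = m10 g * m01 h + m11 g * m11 h].
Proof.
by rewrite /m00 /m01 /m10 /m11 !mxE !big_ord_recl !big_ord0 !addr0 lift0_ord_max.
Qed.

Lemma det22 (g : 'M[int]_2) : \det g = m00 g * m11 g - m01 g * m10 g.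
Proof.
rewrite (expand_det_row _ ord0) !big_ord_recl big_ord0 addr0 lift0_ord_max.
rewrite /cofactor !det_mx11 /m00 /m01 /m10 /m11 !mxE /= !lift0_ord_max.
rewrite addn0 add0n expr0 expr1 mul1r mulN1r mulrN.
by congr (_ - _ * g _ _); apply: val_inj.
Qed.

Lemma id22E : [/\ m00 (1%:M : 'M[int]_2) = 1, m01 (1%:M : 'M[int]_2) = 0,
   m10 (1%:M : 'M[int]_2) = 0 & m11 (1%:M : 'M[int]_2) = 1].
Proof. by rewrite /m00 /m01 /m10 /m11 !mxE. Qed.

Definition mk22 (p q r s : int) : 'M[int]_2 :=
  \matrix_(i, j) if i == ord0 then (if j == ord0 then p else q)
                 else (if j == ord0 then r else s).

Lemma mk22E p q r s :
  [/\ m00 (mk22 p q r s) = p, m01 (mk22 p q r s) = q, m10 (mk22 p q r s) = r &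
      m11 (mk22 p q r s) = s].
Proof. by rewrite /m00 /m01 /m10 /m11 !mxE. Qed.

Lemma SL2_mul g h : SL2 g -> SL2 h -> SL2 (g *m h).
Proof. by rewrite /SL2 det_mulmx => -> ->; rewrite mulr1. Qed.

Lemma SL2_inv g : SL2 g ->
  [/\ SL2 (invmx g), invmx g *m g = 1%:M & g *m invmx g = 1%:M].
Proof.
move=> sg; have u : g \in unitmx by rewrite unitmxE sg unitr1.
by split; [rewrite /SL2 det_inv sg invr1 | exact: mulVmx | exact: mulmxV].
Qed.

Lemma Re_lin (p q : int) (t : algC) :
  'Re (p%:~R * t + q%:~R) = p%:~R * 'Re t + q%:~R.
Proof. by rewrite raddfD /= ReMl ?realz // (Creal_ReP _ (realz _ q)). Qed.

Lemma Im_lin (p q : int) (t : algC) : 'Im (p%:~R * t + q%:~R) = p%:~R * 'Im t.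
Proof.
by rewrite raddfD /= ImMl ?realz // (Creal_ImP _ (realz _ q)) addr0.
Qed.

Lemma lin_indep (w : algC) (A B : int) :
  0 < 'Im w -> A%:~R * w + B%:~R = 0 -> A = 0 /\ B = 0.
Proof.
move=> iw e.
have : 'Im (A%:~R * w + B%:~R) = 0 by rewrite e raddf0.
rewrite Im_lin => /eqP; rewrite mulf_eq0 (negbTE (lt0r_neq0 iw)) orbF intr_eq0.
move=> /eqP A0; split => //.
by move: e; rewrite A0 mul0r add0r => /eqP; rewrite intr_eq0 => /eqP.
Qed.

Lemma jfac_neq0 g t : SL2 g -> 0 < 'Im t -> jfac g t != 0.
Proof.
rewrite /SL2 det22 /jfac => sg imt.
have [r0|rn0] := eqVneq (m10 g) 0.
  rewrite r0 mul0r add0r intr_eq0; apply/eqP => s0.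
  by move: sg; rewrite r0 s0 !mulr0 subrr.
apply/eqP => /(congr1 (fun z => 'Im z)); rewrite Im_lin raddf0 => /eqP.
by rewrite mulf_eq0 intr_eq0 (negbTE rn0) /= gt_eqF.
Qed.

Lemma Im_mob g t : 'Im (mob g t) = (\det g)%:~R * 'Im t / `|jfac g t| ^+ 2.
Proof.
rewrite /mob Im_div -/(jfac g t) /jfac !Re_lin !Im_lin det22.
by congr (_ / _); rewrite intrB !intrM; ring.
Qed.

Lemma Im_mob_gt0 g t : SL2 g -> 0 < 'Im t -> 0 < 'Im (mob g t).
Proof.
move=> sg it; rewrite Im_mob sg mul1r divr_gt0 // exprn_gt0 // normr_gt0.
exact: jfac_neq0.
Qed.

Lemma SL2_of_det_unit g t (k : int) :
  0 < 'Im t -> jfac g t != 0 -> 0 < 'Im (mob g t) -> \det g * k = 1 -> SL2 g.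
Proof.
move=> it jn imt dk.
have [//|dm] : \det g = 1 \/ \det g = -1.
  move/(congr1 absz): dk; rewrite abszM /= => /eqP; rewrite muln_eq1 => /andP[/eqP ? _].
  lia.
move: imt; rewrite Im_mob dm mulN1r mulNr oppr_gt0 => neg.
have : 0 < 'Im t / `|jfac g t| ^+ 2 by rewrite divr_gt0 // exprn_gt0 // normr_gt0.
by move=> pos; move: (lt_trans neg pos); rewrite ltxx.
Qed.

Lemma mob1 t : mob 1%:M t = t.
Proof.
rewrite /mob; case: id22E => -> -> -> ->.
by rewrite mul1r mul0r addr0 add0r divr1.
Qed.

Lemma jfac_mul g h t : jfac h t != 0 ->
  jfac (g *m h) t = jfac g (mob h t) * jfac h t.
Proof.
move=> jn; rewrite /mob -/(jfac h t) {1}/jfac; case: (mul22E g h) => _ _ -> ->.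
by rewrite /jfac mulrDl -mulrA divfK // !intrD !intrM; ring.
Qed.

Lemma mob_mul g h t : jfac h t != 0 -> mob (g *m h) t = mob g (mob h t).
Proof.
move=> jn.
have num : (m00 (g *m h))%:~R * t + (m01 (g *m h))%:~R =
   ((m00 g)%:~R * mob h t + (m01 g)%:~R) * jfac h t :> algC.
  rewrite /mob -/(jfac h t); case: (mul22E g h) => -> -> _ _.
  by rewrite mulrDl -mulrA divfK // !intrD !intrM /jfac; ring.
rewrite [LHS]/mob num -/(jfac (g *m h) t) jfac_mul // /mob -/(jfac g (mob h t)).
by rewrite invfM mulrACA divff // mulr1.
Qed.

Definition Qe (Q : bqf) (x y : algC) : algC :=
  (qa Q)%:~R * x ^+ 2 + (qb Q)%:~R * x * y + (qc Q)%:~R * y ^+ 2.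
Definition disc (Q : bqf) : int := qb Q ^+ 2 - 4 * qa Q * qc Q.

Lemma Qe_act Q h x y : Qe (form_act Q h) x y =
  Qe Q ((m00 h)%:~R * x + (m01 h)%:~R * y) ((m10 h)%:~R * x + (m11 h)%:~R * y).
Proof. by rewrite /Qe /form_act /qa /qb /qc /=; ring. Qed.

Lemma Qe_hom Q l x y : Qe Q (l * x) (l * y) = l ^+ 2 * Qe Q x y.
Proof. by rewrite /Qe; ring. Qed.

Lemma disc_act Q h : disc (form_act Q h) = (\det h) ^+ 2 * disc Q.
Proof. by rewrite /disc /form_act /qa /qb /qc /= det22; ring. Qed.

Lemma Qe_act_inv Q h g w : h *m g = 1%:M -> jfac g w != 0 ->
  jfac g w ^+ 2 * Qe (form_act Q h) (mob g w) 1 = Qe Q w 1.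
Proof.
move=> hg jn.
have [] := mul22E h g; rewrite hg; case: id22E => -> -> -> -> e00 e01 e10 e11.
have tJ : mob g w * jfac g w = (m00 g)%:~R * w + (m01 g)%:~R by rewrite /mob divfK.
rewrite -Qe_hom [_ * mob g w]mulrC tJ mulr1 Qe_act.
have -> : (m00 h)%:~R * ((m00 g)%:~R * w + (m01 g)%:~R) + (m01 h)%:~R * jfac g w
    = (m00 h * m00 g + m01 h * m10 g)%:~R * w + (m00 h * m01 g + m01 h * m11 g)%:~R.
  by rewrite /jfac; ring.
have -> : (m10 h)%:~R * ((m00 g)%:~R * w + (m01 g)%:~R) + (m11 h)%:~R * jfac g w
    = (m10 h * m00 g + m11 h * m10 g)%:~R * w + (m10 h * m01 g + m11 h * m11 g)%:~R.
  by rewrite /jfac; ring.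
by rewrite -e00 -e01 -e10 -e11 mul1r mul0r addr0 add0r.
Qed.

Lemma posdef (a b c x y : int) : 0 < a -> b ^+ 2 - 4 * a * c < 0 ->
  (x != 0) || (y != 0) -> 0 < a * x ^+ 2 + b * x * y + c * y ^+ 2.
Proof.
move=> a0 dn xy.
have sq z : z != 0 -> 0 < z ^+ 2 :> int by move=> zn; rewrite lt_def sqrf_eq0 zn sqr_ge0.
have key : 4 * a * (a * x ^+ 2 + b * x * y + c * y ^+ 2) =
  (2 * a * x + b * y) ^+ 2 - (b ^+ 2 - 4 * a * c) * y ^+ 2 by ring.
suff : 0 < 4 * a * (a * x ^+ 2 + b * x * y + c * y ^+ 2) by rewrite pmulr_rgt0 // mulr_gt0.
rewrite key; have [y0|yn0] := eqVneq y 0.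
  move: xy; rewrite y0 eqxx orbF => xn0.
  have -> : (2 * a * x + b * 0) ^+ 2 - (b ^+ 2 - 4 * a * c) * 0 ^+ 2 =
    (2 * a) ^+ 2 * x ^+ 2 by ring.
  by rewrite mulr_gt0 // sq // mulf_neq0 // gt_eqF.
apply: (@lt_le_trans _ _ (- (b ^+ 2 - 4 * a * c) * y ^+ 2)).
  by rewrite mulr_gt0 // ?oppr_gt0 // sq.
by rewrite mulNr lerDr sqr_ge0.
Qed.

Lemma form_act_props Q h : 0 < qa Q -> disc Q < 0 -> SL2 h ->
  0 < qa (form_act Q h) /\ disc (form_act Q h) = disc Q.
Proof.
move=> a0 dn sh; rewrite disc_act sh expr1n mul1r; split => //.
rewrite /form_act /qa /=; apply: posdef => //.
rewrite -negb_and; apply/negP => /andP[/eqP h0 /eqP h1].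
by move: sh; rewrite /SL2 det22 h0 h1 !mul0r mulr0 subrr.
Qed.

Lemma sqrt_neg_props (d : int) : d < 0 ->
  [/\ sqrtC (d%:~R : algC) ^+ 2 = d%:~R, (sqrtC (d%:~R : algC))^* = - sqrtC (d%:~R),
      'Re (sqrtC (d%:~R : algC)) = 0 & 0 < 'Im (sqrtC (d%:~R : algC))].
Proof.
move=> dlt0; set s := sqrtC _.
have s2 : s ^+ 2 = d%:~R by rewrite sqrtCK.
have sc : s^* = - s.
  have c2 : (s^*) ^+ 2 = s ^+ 2 by rewrite -rmorphXn s2 rmorph_int.
  have /eqP : (s^* - s) * (s^* + s) = 0 by rewrite -subr_sqr c2 subrr.
  rewrite mulf_eq0 => /orP[|]; last by rewrite addr_eq0 => /eqP.
  rewrite subr_eq0 => /eqP/CrealP sreal.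
  have : 0 <= s ^+ 2 by rewrite real_exprn_even_ge0.
  by rewrite s2 ler0z lt_geF.
have re0 : 'Re s = 0 by rewrite ReE sc subrr mul0r.
split => //; rewrite lt_def Im_rootC_ge0 // andbT; apply/eqP => im0.
have s0 : s = 0 by rewrite [s]Crect re0 im0 mulr0 addr0.
move: s2; rewrite s0 expr0n /= => /eqP; rewrite eq_sym intr_eq0 => /eqP d0.
by move: dlt0; rewrite d0 ltxx.
Qed.

Lemma omega_root d Q : 0 < qa Q -> disc Q = d -> Qe Q (omega d Q) 1 = 0.
Proof.
move=> a0 dQ.
have an : ((qa Q)%:~R : algC) != 0 by rewrite intr_eq0 gt_eqF.
have s2 : sqrtC (d%:~R : algC) ^+ 2 = (qb Q)%:~R ^+ 2 - 4 * (qa Q)%:~R * (qc Q)%:~R.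
  by rewrite sqrtCK -dQ /disc; ring.
rewrite /Qe /omega.
transitivity ((sqrtC (d%:~R : algC) ^+ 2 -
    ((qb Q)%:~R ^+ 2 - 4 * (qa Q)%:~R * (qc Q)%:~R)) / (4 * (qa Q)%:~R)).
  by field.
by rewrite s2 subrr mul0r.
Qed.

Lemma omega_ReIm d Q : d < 0 ->
  'Re (omega d Q) = - (qb Q)%:~R / (2 * (qa Q)%:~R) /\
  'Im (omega d Q) = 'Im (sqrtC (d%:~R : algC)) / (2 * (qa Q)%:~R).
Proof.
move=> dn; case: (sqrt_neg_props dn) => _ _ re0 _.
have rl : (2 * ((qa Q)%:~R : algC))^-1 \is Num.real.
  by rewrite realV; apply: realM; [exact: (realn _ 2) | exact: realz].
rewrite /omega (ReMr rl) (ImMr rl) !raddfD !raddfN /= re0 addr0.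
by rewrite (Creal_ReP _ (realz _ _)) (Creal_ImP _ (realz _ _)) oppr0 add0r.
Qed.

Lemma Im_omega d Q : d < 0 -> 0 < qa Q -> 0 < 'Im (omega d Q).
Proof.
move=> dn a0; case: (omega_ReIm Q dn) => _ ->.
case: (sqrt_neg_props dn) => _ _ _ ims.
by rewrite divr_gt0 // mulr_gt0 // ltr0z.
Qed.

Lemma omega_unique_root d Q t : d < 0 -> 0 < qa Q -> disc Q = d ->
  0 < 'Im t -> Qe Q t 1 = 0 -> t = omega d Q.
Proof.
move=> dn a0 dQ it q0.
case: (sqrt_neg_props dn) => s2 _ _ ims; set s := sqrtC _ in s2 ims *.
have an : ((qa Q)%:~R : algC) != 0 by rewrite intr_eq0 gt_eqF.
have /eqP : ((2 * qa Q)%:~R * t + (qb Q)%:~R - s) *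
            ((2 * qa Q)%:~R * t + (qb Q)%:~R + s) = 0.
  transitivity (4 * (qa Q)%:~R * Qe Q t 1 + ((disc Q)%:~R - s ^+ 2)).
    by rewrite /Qe /disc; ring.
  by rewrite q0 dQ s2 mulr0 subrr addr0.
rewrite mulf_eq0 => /orP[/eqP e|/eqP e].
  rewrite /omega -/s; symmetry.
  transitivity (t - ((2 * qa Q)%:~R * t + (qb Q)%:~R - s) / (2 * (qa Q)%:~R)).
    by field.
  by rewrite e mul0r subr0.
have : 'Im ((2 * qa Q)%:~R * t + (qb Q)%:~R + s) = 0 by rewrite e raddf0.
rewrite raddfD /= Im_lin => im0.
have : 0 < (2 * qa Q)%:~R * 'Im t + 'Im s by rewrite addr_gt0 // mulr_gt0 ?ltr0z ?mulr_gt0.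
by rewrite im0 ltxx.
Qed.

Lemma omega_inj d Q1 Q2 : d < 0 -> 0 < qa Q1 -> 0 < qa Q2 ->
  disc Q1 = d -> disc Q2 = d -> omega d Q1 = omega d Q2 -> Q1 = Q2.
Proof.
move=> dn a1 a2 d1 d2 e.
case: (omega_ReIm Q1 dn) (omega_ReIm Q2 dn) => r1 i1 [r2 i2].
case: (sqrt_neg_props dn) => _ _ _ ims.
have ea : qa Q1 = qa Q2.
  have : 'Im (omega d Q1) = 'Im (omega d Q2) by rewrite e.
  have two : (2 : algC) != 0 by rewrite pnatr_eq0.
  rewrite i1 i2 => /(mulfI (negbT (gt_eqF ims))) /invr_inj /(mulfI two).
  by move/intr_inj.
have eb : qb Q1 = qb Q2.
  have : 'Re (omega d Q1) = 'Re (omega d Q2) by rewrite e.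
  have an : (2 * ((qa Q2)%:~R : algC))^-1 != 0.
    by rewrite invr_eq0 mulf_neq0 ?pnatr_eq0 // intr_eq0 gt_eqF.
  by rewrite r1 r2 ea => /(mulIf an)/oppr_inj/intr_inj.
have ec : qc Q1 = qc Q2.
  have : 4 * qa Q2 * qc Q1 = 4 * qa Q2 * qc Q2 by move: d1 d2; rewrite /disc ea eb; lia.
  by apply: mulfI; rewrite mulf_neq0 // gt_eqF.
by move: Q1 Q2 ea eb ec {a1 a2 d1 d2 e r1 r2 i1 i2} => [[? ?] ?] [[? ?] ?]; rewrite /qa /qb /qc /= => -> -> ->.
Qed.

Lemma act_inv d Q g : d < 0 -> 0 < qa Q -> disc Q = d -> SL2 g ->
  [/\ 0 < qa (form_act Q (invmx g)), disc (form_act Q (invmx g)) = d &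
      omega d (form_act Q (invmx g)) = mob g (omega d Q)].
Proof.
move=> dn a0 dQ sg; case: (SL2_inv sg) => sh hg _.
have [a2 d2] := form_act_props a0 (eq_ind_r (fun x => x < 0) dn dQ) sh.
rewrite dQ in d2; split => //; symmetry.
have iw := Im_omega dn a0; have jn := jfac_neq0 sg iw.
apply: omega_unique_root => //; first exact: Im_mob_gt0.
have /eqP := Qe_act_inv Q hg jn; rewrite omega_root // mulf_eq0 expf_eq0 /=.
by rewrite (negbTE jn) => /eqP.
Qed.

Definition sqrtd (d : int) : algC := sqrtC (d%:~R).

Lemma Kelt_int d (k : int) : Kelt d k%:~R.
Proof. by exists k%:~R, 0; rewrite rmorph0 mul0r addr0 rmorph_int. Qed.

Lemma Kelt_sub d x y : Kelt d x -> Kelt d y -> Kelt d (x - y).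
Proof.
move=> [r1 [s1 ->]] [r2 [s2 ->]]; exists (r1 - r2), (s1 - s2).
by rewrite !rmorphB; ring.
Qed.

Lemma Kelt_add d x y : Kelt d x -> Kelt d y -> Kelt d (x + y).
Proof.
move=> kx ky; rewrite -[y]opprK; apply: Kelt_sub => //.
by rewrite -sub0r; apply: Kelt_sub => //; exact: (Kelt_int d 0).
Qed.

Lemma Kelt_mul d x y : Kelt d x -> Kelt d y -> Kelt d (x * y).
Proof.
move=> [r1 [s1 ->]] [r2 [s2 ->]].
exists (r1 * r2 + s1 * s2 * d%:~R), (r1 * s2 + r2 * s1).
have s2e : sqrtC (d%:~R : algC) ^+ 2 = d%:~R by rewrite sqrtCK.
rewrite !rmorphD !rmorphM rmorph_int; set S := sqrtC _ in s2e *.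
by rewrite -s2e; ring.
Qed.

Lemma Kelt_omega d Q : Kelt d (omega d Q).
Proof.
exists (- (qb Q)%:~R / (2 * (qa Q)%:~R)), (1 / (2 * (qa Q)%:~R)).
rewrite /omega !fmorph_div !rmorphN !rmorphM !rmorph_int rmorph_nat rmorph1.
by rewrite mulrDl; congr (_ + _); rewrite mul1r mulrC.
Qed.

Lemma OK_int d (k : int) : OK d k%:~R.
Proof. by split; [exact: Kelt_int | exact: Aint_int]. Qed.

Lemma OK_1 d : OK d 1.
Proof. exact: (OK_int d 1). Qed.

Lemma OK_add d x y : OK d x -> OK d y -> OK d (x + y).
Proof. by move=> [? ?] [? ?]; split; [exact: Kelt_add | exact: rpredD]. Qed.

Lemma OK_sub d x y : OK d x -> OK d y -> OK d (x - y).
Proof. by move=> [? ?] [? ?]; split; [exact: Kelt_sub | exact: rpredB]. Qed.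

Lemma OK_mul d x y : OK d x -> OK d y -> OK d (x * y).
Proof. by move=> [? ?] [? ?]; split; [exact: Kelt_mul | exact: rpredM]. Qed.

Lemma Aint_quad (x : algC) (u v : int) :
  x ^+ 2 + u%:~R * x + v%:~R = 0 -> x \in Aint.
Proof.
move=> e; have [y hy] : exists y : algC, y = - u%:~R - x by eexists.
have hv : (v%:~R : algC) = x * y.
  by apply: (addrI (x ^+ 2 + u%:~R * x)); rewrite e hy; ring.
have hu : (u%:~R : algC) = - (x + y) by rewrite hy; ring.
pose p := ('X - x%:P) * ('X - y%:P).
have pE : p = 'X^2 + (u%:~R)%:P * 'X + (v%:~R)%:P.
  by rewrite /p hu hv polyCN polyCD polyCM; ring.
apply: (@root_monic_Aint p).
- by rewrite /p rootM root_XsubC eqxx.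
- by rewrite /p monicMl ?monicXsubC.
rewrite pE; apply/polyOverP => i.
rewrite !coefD coefXn coefCM coefX coefC.
by case: i => [|[|[|i]]] /=; rewrite ?mulr0 ?mulr1 ?add0r ?addr0 ?intr_int.
Qed.

(** The ring of integers of K is Z + Z (-b + sqrt d) / 2 for any b with
    b^2 = d mod 4.  Integrality of the trace and of the norm of
    x + y sqrt d gives 2x and x^2 - d y^2 integral; squarefreeness of d then
    forces 2y to be integral, and parity arguments modulo 4 finish. *)

Lemma sqfree_rat_sq (m k : int) (v : rat) : sqfree_int m ->
  m%:~R * v ^+ 2 = k%:~R -> exists z : int, v = z%:~R.
Proof.
move=> sq e; set n := numq v; set dn := denq v.
have dn0 : 0 < dn := denq_gt0 v.
have vE : v = n%:~R / dn%:~R by rewrite divq_num_den.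
have dnn : (dn%:~R : rat) != 0 by rewrite intr_eq0 gt_eqF.
have ie : m * n ^+ 2 = k * dn ^+ 2.
  apply: (@intr_inj rat).
  have -> : ((m * n ^+ 2)%:~R : rat) = m%:~R * v ^+ 2 * dn%:~R ^+ 2.
    by rewrite vE intrM rmorphXn; field.
  by rewrite e intrM rmorphXn.
have dv : (`|dn| ^ 2 %| `|m| * `|n| ^ 2)%N.
  by rewrite -!abszX -abszM ie abszM dvdn_mull.
have cp : coprime (`|dn| ^ 2) (`|n| ^ 2).
  by rewrite coprimeXl // coprimeXr // coprime_sym coprime_num_den.
rewrite Gauss_dvdl // in dv.
have [d1|d1] := leqP `|dn| 1.
  have dn1 : dn = 1 by move: d1 dn0; case: (dn) => [k1|k1] //=; lia.
  by exists n; rewrite vE dn1 divr1.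
have := sq _ (pdiv_prime d1); rewrite dvdzE /= (dvdn_trans _ dv) //.
by rewrite dvdn_exp2r // pdiv_dvd.
Qed.

Lemma parity_disc1mod4 (d u z n b k : int) : (d %% 4)%Z = 1 ->
  u ^+ 2 - d * z ^+ 2 = 4 * n -> b ^+ 2 - 4 * k = d -> exists w, u + b * z = 2 * w.
Proof.
move=> h1 h2 h3.
have [u1 [eu|eu]] : exists u1, u = 2 * u1 \/ u = 2 * u1 + 1 by exists (u %/ 2)%Z; lia.
all: have [z1 [ez|ez]] : exists z1, z = 2 * z1 \/ z = 2 * z1 + 1 by exists (z %/ 2)%Z; lia.
all: have [b1 [eb|eb]] : exists b1, b = 2 * b1 \/ b = 2 * b1 + 1 by exists (b %/ 2)%Z; lia.
all: have [d1 ed] : exists d1, d = 4 * d1 + 1 by exists (d %/ 4)%Z; lia.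
all: subst; try (exfalso; lia).
all: first [by exists (u1 + (2 * b1 + 1) * z1); ring
           | by exists (u1 + 2 * b1 * z1 + b1 + z1 + 1); ring].
Qed.

Lemma parity_disc4m (m u w n : int) : ((m %% 4)%Z = 2 \/ (m %% 4)%Z = 3) ->
  u ^+ 2 - m * w ^+ 2 = 4 * n -> exists z, w = 2 * z.
Proof.
move=> h1 h2.
have [u1 [eu|eu]] : exists u1, u = 2 * u1 \/ u = 2 * u1 + 1 by exists (u %/ 2)%Z; lia.
all: have [z1 [ez|ez]] : exists z1, w = 2 * z1 \/ w = 2 * z1 + 1 by exists (w %/ 2)%Z; lia.
all: have [m1 em] : exists m1, m = 4 * m1 + (m %% 4)%Z by exists (m %/ 4)%Z; lia.
all: try (by exists z1).
all: exfalso; case: h1 => h1; rewrite h1 in em; subst; lia.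
Qed.

Lemma even_of_sq_diff (u z m n : int) : u ^+ 2 - 4 * m * z ^+ 2 = 4 * n ->
  exists u1, u = 2 * u1.
Proof.
move=> h.
have [u1 [eu|eu]] : exists u1, u = 2 * u1 \/ u = 2 * u1 + 1 by exists (u %/ 2)%Z; lia.
  by exists u1.
by subst; exfalso; lia.
Qed.

Lemma OK_trace_norm d (x y : rat) : d < 0 ->
  ratr x + ratr y * sqrtd d \in Aint ->
  (exists u : int, 2 * x = u%:~R) /\ (exists n : int, x ^+ 2 - d%:~R * y ^+ 2 = n%:~R).
Proof.
move=> dn ai; case: (sqrt_neg_props dn) => s2 sc _ _.
rewrite -/(sqrtd d) in s2 sc; set r := _ + _ in ai.
have cr : r^* = ratr x - ratr y * sqrtd d.
  by rewrite rmorphD /= [X in _ + X]rmorphM /= sc !conj_Crat ?Crat_rat // mulrN.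
have acr : r^* \in Aint by rewrite Aint_aut.
have ratr_int (q : rat) : ratr q \in Aint -> exists u : int, q = u%:~R.
  move=> a; have /intrP [u hu] := Cint_rat_Aint (Crat_rat q) a.
  by exists u; apply: (fmorph_inj (@ratr algC)); rewrite rmorph_int.
split; apply: ratr_int.
  rewrite rmorphM rmorph_nat.
  have -> : 2 * ratr x = r + r^* by rewrite cr /r; ring.
  exact: rpredD.
rewrite rmorphB /= !rmorphXn /= rmorphM /= rmorphXn rmorph_int.
have -> : ratr x ^+ 2 - d%:~R * ratr y ^+ 2 = r * r^* by rewrite cr /r -s2; ring.
exact: rpredM.
Qed.

Lemma disc_coords (d b k u n : int) (y : rat) : fund_disc d -> b ^+ 2 - 4 * k = d ->
  d%:~R * (2 * y) ^+ 2 = (u ^+ 2 - 4 * n)%:~R ->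
  exists z w : int, 2 * y = z%:~R /\ u + b * z = 2 * w.
Proof.
move=> fd hb dv.
have int_eq (m z : int) : m%:~R * z%:~R ^+ 2 = (u ^+ 2 - 4 * n)%:~R :> rat ->
    u ^+ 2 - m * z ^+ 2 = 4 * n.
  move=> h; apply: (@intr_inj rat).
  transitivity ((u ^+ 2)%:~R - m%:~R * z%:~R ^+ 2 : rat); first by ring.
  by rewrite h; ring.
case: fd => [[_ [d4 sq]] | [m [dm [m4 sq]]]].
  have [z vz] := sqfree_rat_sq sq dv; rewrite vz in dv.
  have [w hw] := parity_disc1mod4 d4 (int_eq _ _ dv) hb.
  by exists z, w.
have dv' : m%:~R * (2 * (2 * y)) ^+ 2 = (u ^+ 2 - 4 * n)%:~R.
  by rewrite -dv dm; ring.
have [w vw] := sqfree_rat_sq sq dv'; rewrite vw in dv'.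
have ie := int_eq _ _ dv'.
have [z wz] := parity_disc4m m4 ie.
have [u1 eu] : exists u1, u = 2 * u1.
  by apply: (@even_of_sq_diff _ z m n); rewrite -ie wz; ring.
have [b1 eb] : exists b1, b = 2 * b1.
  have [b1 [eb|eb]] : exists b1, b = 2 * b1 \/ b = 2 * b1 + 1 by exists (b %/ 2)%Z; lia.
    by exists b1.
  by move: hb; rewrite dm eb; lia.
exists z, (u1 + b1 * z); split; last by rewrite eu eb; ring.
apply: (@mulfI _ 2); first by rewrite pnatr_eq0.
by rewrite vw wz rmorphM.
Qed.

Lemma OK_decomp d (b k : int) r : fund_disc d -> d < 0 -> b ^+ 2 - 4 * k = d ->
  OK d r -> exists m n : int, r = m%:~R + n%:~R * ((- b%:~R + sqrtd d) / 2).
Proof.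
move=> fd dn hb [[x [y rE]] ai].
rewrite rE -/(sqrtd d) in ai.
have [[u hu] [n hn]] := OK_trace_norm dn ai.
have dv : d%:~R * (2 * y) ^+ 2 = (u ^+ 2 - 4 * n)%:~R.
  transitivity ((2 * x) ^+ 2 - 4 * (x ^+ 2 - d%:~R * y ^+ 2)); first by ring.
  by rewrite hu hn; ring.
have [z [w [vz hw]]] := disc_coords fd hb dv.
exists w, z.
have half (q : rat) (v : int) : 2 * q = v%:~R -> ratr q = (v%:~R : algC) / 2.
  by move=> e; have := congr1 (@ratr algC) e; rewrite rmorphM rmorph_nat rmorph_int => <-; field.
have wE : (w%:~R : algC) = (u%:~R + b%:~R * z%:~R) / 2.
  have : ((u + b * z)%:~R : algC) = (2 * w)%:~R by rewrite hw.
  by rewrite rmorphD rmorphM rmorphM /= => ->; field.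
by rewrite rE (half _ _ hu) (half _ _ vz) wE /sqrtd; field.
Qed.

Definition scal (k : algC) (S : cset) : cset := fun x => exists y, S y /\ x = k * y.

Definition module d (S : cset) : Prop :=
  [/\ S 0, (forall x y, S x -> S y -> S (x - y)) &
      (forall r x, OK d r -> S x -> S (r * x))].

Lemma module_add d S x y : module d S -> S x -> S y -> S (x + y).
Proof.
by move=> [S0 Ssub _] sx sy; have := Ssub _ _ sx (Ssub _ _ S0 sy); rewrite sub0r opprK.
Qed.

Lemma eqI_sym I J : eqI I J -> eqI J I.
Proof. by move=> h x; split => /h. Qed.

Lemma eqI_trans I J K : eqI I J -> eqI J K -> eqI I K.
Proof. by move=> h1 h2 x; split => [/h1/h2|/h2/h1]. Qed.

Lemma prodI_eqI_r I J J' : eqI J J' -> eqI (prodI I J) (prodI I J').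
Proof.
by move=> h x; split => -[s [hs ->]]; exists s; split => // p /hs [? /h ?].
Qed.

Lemma OK_module d : module d (OK d).
Proof. by split; [exact: (OK_int d 0) | exact: OK_sub | exact: OK_mul]. Qed.

Lemma scal_module d k S : module d S -> module d (scal k S).
Proof.
move=> [h0 hs hm]; split.
- by exists 0; rewrite mulr0.
- by move=> _ _ [y1 [s1 ->]] [y2 [s2 ->]]; exists (y1 - y2); split; [apply: hs | ring].
- by move=> r _ okr [y [sy ->]]; exists (r * y); split; [apply: hm | ring].
Qed.

Lemma prodI_principal d S k : module d S -> eqI (prodI S (principal d k)) (scal k S).
Proof.
move=> mS x; split.
  move=> [s [hs ->]]; elim: s hs => [|p s IH] hs.
    by exists 0; rewrite big_nil mulr0; case: mS.
  have [y [sy ey]] : scal k S (\sum_(q <- s) q.1 * q.2).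
    by apply: IH => q qs; apply: hs; rewrite inE qs orbT.
  have [p1 [r [okr p2]]] : S p.1 /\ principal d k p.2 by apply: hs; rewrite inE eqxx.
  exists (r * p.1 + y); split; first by apply: (module_add mS) => //; case: mS => _ _; exact.
  by rewrite big_cons ey p2; ring.
move=> [y [sy ->]]; exists [:: (y, k)]; split.
  move=> p; rewrite inE => /eqP -> /=; split => //.
  by exists 1; split; [exact: OK_1 | rewrite mulr1].
by rewrite big_cons big_nil addr0 mulrC.
Qed.

Lemma frac_ideal_eqI d I J : eqI I J -> frac_ideal d I -> frac_ideal d J.
Proof.
move=> h [k [z [s [m [[x [Ix xn]] [c [cn okc cI]]]]]]].
do ![split] => [y /h|||||]; first exact: k.
- exact/h.
- by move=> y1 y2 /h a /h b; apply/h; apply: s.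
- by move=> r y okr /h Iy; apply/h; apply: m.
- by exists x; split => //; apply/h.
- by exists c; split => // y /h; apply: cI.
Qed.

Lemma coprime_integral_eqI d N I J :
  eqI I J -> coprime_integral d N I -> coprime_integral d N J.
Proof.
move=> h [f sub sm]; split; first exact: frac_ideal_eqI f.
  by move=> x /h; apply: sub.
move=> x; split; first by move=> [y [z [/h Iy nz ->]]]; apply/sm; exists y, z.
by move/sm => [y [z [/h Iy nz ->]]]; exists y, z.
Qed.

Lemma frac_of_module d S : module d S -> (forall x, S x -> Kelt d x) ->
  (exists x, S x /\ x != 0) ->
  (exists c, [/\ c != 0, OK d c & forall x, S x -> OK d (c * x)]) -> frac_ideal d S.
Proof. by case. Qed.

Lemma frac_OK d : frac_ideal d (OK d).
Proof.
apply: frac_of_module; first exact: OK_module.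
- by move=> x [].
- by exists 1; split; [exact: OK_1 | exact: oner_neq0].
- by exists 1; split; [exact: oner_neq0 | exact: OK_1 | move=> x; rewrite mul1r].
Qed.

Lemma frac_scal d (k : algC) S : frac_ideal d S -> module d S -> k != 0 -> OK d k ->
  frac_ideal d (scal k S).
Proof.
move=> [kS [_ [_ [_ [[x [Sx xn]] [c [cn okc cI]]]]]]] mS kn okk.
apply: frac_of_module; first exact: scal_module.
- by move=> _ [y [Sy ->]]; apply: Kelt_mul; [case: okk | exact: kS].
- by exists (k * x); split; [exists x | rewrite mulf_neq0].
- exists c; split => // _ [y [Sy ->]].
  by rewrite mulrCA; apply: OK_mul => //; apply: cI.
Qed.

(** If a is coprime to N and a S is integral, then a S is an integral ideal
    coprime to N O_K (Bezout: 1 = u a + v N). *)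
Lemma coprime_scal d N S (a : int) : module d S -> frac_ideal d S ->
  (forall r, OK d r -> S r) -> (forall y, S y -> OK d (a%:~R * y)) ->
  coprimez a N%:Z -> a != 0 -> coprime_integral d N (scal a%:~R S).
Proof.
move=> mS fS okS aS cp an; split.
- by apply: frac_scal => //; [rewrite intr_eq0 | exact: OK_int].
- by move=> _ [y [Sy ->]]; apply: aS.
move=> x; split.
  move=> [_ [_ [[y [Sy ->]] [r [okr ->]] ->]]].
  by apply: OK_add; [exact: aS | apply: OK_mul => //; exact: (OK_int d N)].
move=> okx.
have [u [v e]] : exists u v : int, u * a + v * N%:Z = 1.
  have [u [v e]] := Bezoutz a N%:Z; exists u, v.
  by move: cp; rewrite /coprimez => /eqP c1; rewrite e c1.
exists (a%:~R * (u%:~R * x)), (N%:R * (v%:~R * x)); split.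
- by exists (u%:~R * x); split => //; apply: okS; apply: OK_mul => //; exact: OK_int.
- by exists (v%:~R * x); split => //; apply: OK_mul => //; exact: OK_int.
transitivity (((u * a + v * N%:Z)%:~R : algC) * x); first by rewrite e mul1r.
by rewrite intrD !intrM; ring.
Qed.

Lemma principal_eqI d nu j : nu != 0 -> j != 0 -> OK d (nu / j) -> OK d (j / nu) ->
  eqI (principal d nu) (principal d j).
Proof.
have step x y : y != 0 -> OK d (x / y) -> forall z, principal d x z -> principal d y z.
  move=> yn o z [r [okr ->]]; exists (x / y * r); split; first exact: OK_mul.
  by rewrite mulrA mulrCA divff // mulr1.
by move=> nn jn o1 o2 z; split; apply: step.
Qed.

Lemma lat1 w : lat w 1.
Proof. by exists 0, 1; rewrite mul0r add0r. Qed.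

Lemma lat_w w : lat w w.
Proof. by exists 1, 0; rewrite mul1r addr0. Qed.

Lemma Kelt_lat d w x : Kelt d w -> lat w x -> Kelt d x.
Proof.
move=> kw [m [n ->]]; apply: Kelt_add; last exact: Kelt_int.
by apply: Kelt_mul => //; exact: Kelt_int.
Qed.

Lemma OK_a_omega d Q : 0 < qa Q -> disc Q = d -> OK d ((qa Q)%:~R * omega d Q).
Proof.
move=> a0 dQ; split; first by apply: Kelt_mul; [exact: Kelt_int | exact: Kelt_omega].
apply: (@Aint_quad _ (qb Q) (qa Q * qc Q)).
transitivity ((qa Q)%:~R * Qe Q (omega d Q) 1); first by rewrite /Qe; ring.
by rewrite omega_root // mulr0.
Qed.

Lemma OK_a_lat d Q y : 0 < qa Q -> disc Q = d ->
  lat (omega d Q) y -> OK d ((qa Q)%:~R * y).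
Proof.
move=> a0 dQ [m [n ->]]; rewrite mulrDr mulrCA -intrM.
by apply: OK_add; [apply: OK_mul; [exact: OK_int | exact: OK_a_omega] | exact: OK_int].
Qed.

(** [omega_Q, 1] is an O_K-module: since O_K = Z + Z a omega_Q and
    a omega_Q^2 = - b omega_Q - c, multiplication by O_K preserves it. *)
Lemma lat_module d Q : fund_disc d -> d < 0 -> 0 < qa Q -> disc Q = d ->
  module d (lat (omega d Q)).
Proof.
move=> fd dn a0 dQ; split.
- by exists 0, 0; rewrite !mul0r addr0.
- move=> _ _ [m1 [n1 ->]] [m2 [n2 ->]]; exists (m1 - m2), (n1 - n2).
  by rewrite !intrB; ring.
move=> r _ okr [k1 [l ->]].
have hb : qb Q ^+ 2 - 4 * (qa Q * qc Q) = d by rewrite -dQ /disc mulrA.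
have [m [n ->]] := OK_decomp fd dn hb okr.
have aw : (- (qb Q)%:~R + sqrtd d) / 2 = (qa Q)%:~R * omega d Q.
  by rewrite /omega /sqrtd; field; rewrite intr_eq0 gt_eqF.
exists (m * k1 - n * k1 * qb Q + n * l * qa Q), (m * l - n * k1 * qc Q).
transitivity ((m * k1 - n * k1 * qb Q + n * l * qa Q)%:~R * omega d Q +
  (m * l - n * k1 * qc Q)%:~R + (n * k1)%:~R * Qe Q (omega d Q) 1).
  by rewrite aw /Qe; ring.
by rewrite omega_root // mulr0 addr0.
Qed.

Lemma frac_lat d Q : fund_disc d -> d < 0 -> 0 < qa Q -> disc Q = d ->
  frac_ideal d (lat (omega d Q)).
Proof.
move=> fd dn a0 dQ; apply: frac_of_module; first exact: lat_module.
- by move=> x; apply: Kelt_lat; exact: Kelt_omega.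
- by exists 1; split; [exact: lat1 | exact: oner_neq0].
exists (qa Q)%:~R; split; [by rewrite intr_eq0 gt_eqF | exact: OK_int |].
by move=> y; apply: OK_a_lat.
Qed.

(** [omega_Q, 1] lies in I_K(n) when gcd(a, N) = 1: it is A B^-1 for the
    coprime integral ideals A = a [omega_Q, 1] and B = a O_K (which is
    literally the set a O_K of coprime_scal). *)
Lemma I_K_lat d N Q : fund_disc d -> d < 0 -> QN d N Q -> I_K d N (lat (omega d Q)).
Proof.
move=> fd dn [[a0 _ dQ] cp].
have an : qa Q != 0 by rewrite gt_eqF.
have mL := lat_module fd dn a0 dQ.
have fL := frac_lat fd dn a0 dQ.
split => //.
exists (prodI (lat (omega d Q)) (principal d (qa Q)%:~R)), (principal d (qa Q)%:~R).
split => //.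
- apply: coprime_integral_eqI; first exact: eqI_sym (prodI_principal _ mL).
  apply: coprime_scal => //; last by move=> y; apply: OK_a_lat.
  by case: mL => _ _ Lmul r okr; rewrite -[r]mulr1; apply: Lmul => //; exact: lat1.
- apply: (@coprime_scal d N (OK d) (qa Q)) => //; first exact: OK_module.
  + exact: frac_OK.
  + by move=> y oky; apply: OK_mul => //; exact: OK_int.
Qed.

Lemma lat_mob g w : SL2 g -> jfac g w != 0 ->
  eqI (lat w) (scal (jfac g w) (lat (mob g w))).
Proof.
rewrite /SL2 det22 => sg jn.
have tJ : jfac g w * mob g w = (m00 g)%:~R * w + (m01 g)%:~R by rewrite /mob mulrC divfK.
move=> x; split.
  move=> [m [n ->]].
  exists ((m * m11 g - n * m10 g)%:~R * mob g w + (- m * m01 g + n * m00 g)%:~R).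
  split; first by exists (m * m11 g - n * m10 g), (- m * m01 g + n * m00 g).
  rewrite mulrDr mulrCA tJ /jfac.
  transitivity (((m00 g * m11 g - m01 g * m10 g) * m)%:~R * w +
                ((m00 g * m11 g - m01 g * m10 g) * n)%:~R).
    by rewrite sg !mul1r.
  by ring.
move=> [_ [[m [n ->]] ->]].
exists (m * m00 g + n * m10 g), (m * m01 g + n * m11 g).
by rewrite mulrDr mulrCA tJ /jfac; ring.
Qed.

(** The multipliers of a lattice [w, 1] with w in K lie in O_K: x w and x
    are integral combinations of w and 1, so x satisfies a monic integral
    quadratic equation. *)
Lemma lat_multiplier_OK d w x : Kelt d w -> (forall y, lat w y -> lat w (x * y)) ->
  OK d x.
Proof.
move=> kw h.
have [r [s xs]] : lat w x by rewrite -[x]mulr1; apply: h; exact: lat1.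
have [p [q xw]] := h _ (lat_w w).
split; first by apply: (Kelt_lat kw); exists r, s.
apply: (@Aint_quad _ (- (p + s)) (p * s - q * r)).
have e1 : (x - p%:~R) * w = q%:~R by rewrite mulrBl xw; ring.
have e2 : x - s%:~R = r%:~R * w by rewrite xs; ring.
transitivity ((x - p%:~R) * (x - s%:~R) - q%:~R * r%:~R); first by ring.
by rewrite e2 mulrCA e1; ring.
Qed.

(** Two homothety factors between the same pair of lattices generate the
    same principal ideal: their ratio is a unit multiplier. *)
Lemma homothety_principal d w w' nu j : Kelt d w' -> nu != 0 -> j != 0 ->
  eqI (lat w) (scal nu (lat w')) -> eqI (lat w) (scal j (lat w')) ->
  eqI (principal d nu) (principal d j).
Proof.
move=> kw' nun jn Lnu Lj.
have ratio_mult x y : y != 0 -> eqI (lat w) (scal x (lat w')) ->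
    eqI (lat w) (scal y (lat w')) -> OK d (x / y).
  move=> yn Lx Ly; apply: (lat_multiplier_OK kw') => z Lz.
  have [z' [Lz' e]] : scal y (lat w') (x * z) by apply/Ly/Lx; exists z.
  by rewrite mulrAC e mulrC mulKf.
by apply: principal_eqI => //; apply: ratio_mult.
Qed.

Lemma homothety_matrix w w' nu : 0 < 'Im w -> 0 < 'Im w' ->
  eqI (lat w) (scal nu (lat w')) ->
  exists M, [/\ SL2 M, mob M w = w' & jfac M w = nu].
Proof.
move=> iw iw' L.
have [_ [[al [be ->]] ew]] := (L w).1 (lat_w w).
have [_ [[ga [de ->]] e1]] := (L 1).1 (lat1 w).
have [al' [be' ew']] : lat w (nu * w') by apply/L; exists w'; split => //; exact: lat_w.
have [ga' [de' en]] : lat w nu by apply/L; exists 1; split; [exact: lat1 | rewrite mulr1].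
have nun : nu != 0 by apply/eqP => n0; move/eqP: e1; rewrite n0 mul0r oner_eq0.
pose M := mk22 al' be' ga' de'.
case: (mk22E al' be' ga' de') => M00 M01 M10 M11.
have jM : jfac M w = nu by rewrite /jfac M10 M11 en.
have mM : mob M w = w' by rewrite /mob -/(jfac M w) jM M00 M01 -ew' mulrC mulKf.
have c1 : (al * al' + be * ga' - 1)%:~R * w + (al * be' + be * de')%:~R = 0.
  transitivity (al%:~R * (nu * w') + be%:~R * nu - w); last by rewrite [X in _ - X]ew; ring.
  by rewrite ew' en; ring.
have c2 : (ga * al' + de * ga')%:~R * w + (ga * be' + de * de' - 1)%:~R = 0.
  transitivity (ga%:~R * (nu * w') + de%:~R * nu - 1); last by rewrite [X in _ - X]e1; ring.
  by rewrite ew' en; ring.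
have [h1 h2] := lin_indep iw c1.
have [h3 h4] := lin_indep iw c2.
have dM : \det M * (al * de - be * ga) = 1.
  rewrite det22 M00 M01 M10 M11.
  transitivity ((al * al' + be * ga') * (ga * be' + de * de') -
                (al * be' + be * de') * (ga * al' + de * ga')); first by ring.
  have h1' : al * al' + be * ga' = 1 by lia.
  have h4' : ga * be' + de * de' = 1 by lia.
  by rewrite h1' h2 h3 h4'; ring.
exists M; split => //.
by apply: (SL2_of_det_unit iw _ _ dM); rewrite ?jM ?mM.
Qed.

Section ClassMap.

Variables (d : int) (N : nat) (P : cset -> Prop) (G : 'M[int]_2 -> Prop).
Hypothesis fd : fund_disc d.
Hypothesis dn : d < 0.
Hypothesis P_eqI : forall I J, eqI I J -> P I -> P J.
Hypothesis P_principal : forall I, P I -> P_K d N I.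
Hypothesis G_SL2 : forall g, G g -> SL2 g.
Hypothesis G_inv : forall g, G g -> G (invmx g).

Lemma same_class_iff_jfac Q g : 0 < qa Q -> disc Q = d -> SL2 g ->
  same_class P (lat (omega d Q)) (lat (omega d (form_act Q (invmx g)))) <->
  P (principal d (jfac g (omega d Q))).
Proof.
move=> a0 dQ sg; set w := omega d Q.
have jn := jfac_neq0 sg (Im_omega dn a0).
have [a2 d2 om2] := act_inv dn a0 dQ sg.
have mL2 := lat_module fd dn a2 d2.
have Lj : eqI (lat w) (scal (jfac g w) (lat (omega d (form_act Q (invmx g))))).
  by rewrite om2; exact: lat_mob.
split.
  move=> [C [PC eC]]; have [_ [nu [nun _ eCnu]]] := P_principal PC.
  have Lnu : eqI (lat w) (scal nu (lat (omega d (form_act Q (invmx g))))).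
    exact: eqI_trans eC (eqI_trans (prodI_eqI_r _ eCnu) (prodI_principal _ mL2)).
  apply: (P_eqI _ PC); apply: eqI_trans eCnu _.
  exact: homothety_principal (Kelt_omega _ _) nun jn Lnu Lj.
move=> Pj; exists (principal d (jfac g w)); split => //.
exact: eqI_trans Lj (eqI_sym (prodI_principal _ mL2)).
Qed.

Lemma simG_iff_coset Q g : 0 < qa Q -> disc Q = d -> SL2 g ->
  simG G Q (form_act Q (invmx g)) <->
  exists g1 h, [/\ G g1, SL2 h, mob h (omega d Q) = omega d Q & g = g1 *m h].
Proof.
move=> a0 dQ sg; set w := omega d Q.
have iw := Im_omega dn a0.
have [a2 d2 om2] := act_inv dn a0 dQ sg.
split.
  move=> [g0 [Gg0 e0]]; have sg0 := G_SL2 Gg0.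
  case: (SL2_inv sg0) => si0 V0 W0.
  have [_ _ om0] := act_inv dn a0 dQ si0.
  rewrite invmxK -e0 in om0.
  exists (invmx g0), (g0 *m g); split; [exact: G_inv | exact: SL2_mul | | ].
    rewrite mob_mul ?jfac_neq0 // -om2 om0 -mob_mul ?jfac_neq0 //.
    by rewrite W0 mob1.
  by rewrite mulmxA V0 mul1mx.
move=> [g1 [h [Gg1 sh hw eg]]].
have [a3 d3 om3] := act_inv dn a0 dQ (G_SL2 Gg1).
exists (invmx g1); split; first exact: G_inv.
apply: (omega_inj dn a2 a3 d2 d3).
by rewrite om3 om2 eg mob_mul ?hw // jfac_neq0.
Qed.

Lemma simG_act Q Q' : simG G Q Q' -> exists g, SL2 g /\ Q' = form_act Q (invmx g).
Proof.
move=> [g0 [Gg0 ->]]; case: (SL2_inv (G_SL2 Gg0)) => sg _ _.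
by exists (invmx g0); rewrite invmxK.
Qed.

Lemma same_class_act Q Q' : 0 < qa Q -> disc Q = d -> 0 < qa Q' -> disc Q' = d ->
  same_class P (lat (omega d Q)) (lat (omega d Q')) ->
  exists g, SL2 g /\ Q' = form_act Q (invmx g).
Proof.
move=> a0 dQ a0' dQ' [C [PC eC]].
have [_ [nu [_ _ eCnu]]] := P_principal PC.
have L : eqI (lat (omega d Q)) (scal nu (lat (omega d Q'))).
  apply: eqI_trans eC (eqI_trans (prodI_eqI_r _ eCnu) _).
  exact: prodI_principal (lat_module fd dn a0' dQ').
have [M [sM mM _]] := homothety_matrix (Im_omega dn a0) (Im_omega dn a0') L.
have [aM dM omM] := act_inv dn a0 dQ sM.
by exists M; split => //; apply: (omega_inj dn a0' aM dQ' dM); rewrite omM mM.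
Qed.

Lemma wd_inj_propertyP : phi_wd_inj d N P G -> propertyP d N P G.
Proof.
move=> [_ wd inj] Q g qn sg qn2; have [[a0 _ dQ] _] := qn.
rewrite -same_class_iff_jfac // -simG_iff_coset //.
by split; [apply: inj | apply: wd].
Qed.

Lemma propertyP_wd_inj : propertyP d N P G -> phi_wd_inj d N P G.
Proof.
move=> PP; split.
- by move=> Q; exact: I_K_lat.
- move=> Q Q' qn qn' sim; have [[a0 _ dQ] _] := qn.
  have [g [sg eQ']] := simG_act sim; rewrite eQ' in qn' sim *.
  by apply/same_class_iff_jfac => //; apply/(PP _ _ qn sg qn')/simG_iff_coset.
- move=> Q Q' qn qn' cl; have [[a0 _ dQ] _] := qn; have [[a0' _ dQ'] _] := qn'.
  have [g [sg eQ']] := same_class_act a0 dQ a0' dQ' cl; rewrite eQ' in qn' cl *.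
  by apply/simG_iff_coset => //; apply/(PP _ _ qn sg qn')/same_class_iff_jfac.
Qed.

End ClassMap.

(** Only closure of P under equality of ideals, P ⊆ P_K(n), and closure of
    Gamma under inverses are used. *)
Theorem proposition2p4 (d : int) (N : nat) (P : cset -> Prop) (G : 'M[int]_2 -> Prop) :
  fund_disc d -> d < 0 -> (0 < N)%N ->
  ideal_subgroup d N P ->
  (forall I, P_K1 d N I -> P I) ->
  (forall I, P I -> P_K d N I) ->
  SL2_subgroup G ->
  (phi_wd_inj d N P G <-> propertyP d N P G).
Proof.
move=> fd dn _ [P_eqI _ _ _ _] _ P_principal [G_SL2 _ _ G_inv].
split; [exact: wd_inj_propertyP | exact: propertyP_wd_inj].
Qed.
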